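(* Let $(G,d)$ be a group with a two-sided invariant metric, $A\le G$ a subgroup, $\langle t\rangle\cong\mathbb Z$ with metric $|m-n|$, and let $d$ also denote the Graev metric on the free product $G*\langle t\rangle$. View $G*tAt^{-1}$ as the subgroup of $G*\langle t\rangle$ generated by $G$ and $tAt^{-1}$. If $A$ is closed in $G$, then $G*tAt^{-1}$ is closed in $(G*\langle t\rangle,d)$.
   Context: Graev metric on a free product $H_1*H_2$ of groups with two-sided invariant metrics $(H_1,d_1),(H_2,d_2)$: on $H=H_1\cup H_2$ use $d_i$ on $H_i$ and $d(h_1,h_2)=d_1(h_1,e)+d_2(e,h_2)$ for $h_i\in H_i$; then $\underline d(f_1,f_2)=\inf\{\sum_i d(\alpha_1(i),\alpha_2(i)):|\alpha_1|=|\alpha_2|,\ \hat\alpha_j=f_j\}$ over words $\alpha_j$ in the alphabet $H$, where $\hat\alpha$ is the product of the letters in $H_1*H_2$. *)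

From Stdlib Require Import Reals ZArith List.
Import ListNotations.
Open Scope R_scope.

Record IMGroup := {
  carrier :> Type;
  gmul : carrier -> carrier -> carrier;
  ginv : carrier -> carrier;
  gone : carrier;
  gmul_assoc : forall x y z, gmul x (gmul y z) = gmul (gmul x y) z;
  gmul_1l : forall x, gmul gone x = x;
  gmul_1r : forall x, gmul x gone = x;
  gmul_Vl : forall x, gmul (ginv x) x = gone;
  gmul_Vr : forall x, gmul x (ginv x) = gone;
  gdist : carrier -> carrier -> R;
  gdist_eq0 : forall x y, gdist x y = 0 <-> x = y;
  gdist_sym : forall x y, gdist x y = gdist y x;
  gdist_tri : forall x y z, gdist x z <= gdist x y + gdist y z;
  gdist_linv : forall z x y, gdist (gmul z x) (gmul z y) = gdist x y;
  gdist_rinv : forall z x y, gdist (gmul x z) (gmul y z) = gdist x y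
}.

(* Letters of the free product G * <t>: inl g is g in G, inr n is t^n. *)
Definition letter (G : IMGroup) : Type := (carrier G + Z)%type.
Definition word (G : IMGroup) : Type := list (letter G).

(* The metric on the alphabet H = G u <t> (identity shared, cf. context). *)
Definition letter_dist (G : IMGroup) (x y : letter G) : R :=
  match x, y with
  | inl g, inl h => gdist G g h
  | inr m, inr n => Rabs (IZR (m - n))
  | inl g, inr n => gdist G g (gone G) + Rabs (IZR n)
  | inr m, inl h => Rabs (IZR m) + gdist G (gone G) h
  end.

Definition word_dist (G : IMGroup) (a b : word G) : R :=
  fold_right Rplus 0 (map (fun p => letter_dist G (fst p) (snd p)) (combine a b)).

Inductive word_step (G : IMGroup) : word G -> word G -> Prop :=
  | ws_del1 : forall u v, word_step G (u ++ inl (gone G) :: v) (u ++ v)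
  | ws_del2 : forall u v, word_step G (u ++ inr 0%Z :: v) (u ++ v)
  | ws_mul1 : forall u v g h,
      word_step G (u ++ inl g :: inl h :: v) (u ++ inl (gmul G g h) :: v)
  | ws_mul2 : forall u v m n,
      word_step G (u ++ inr m :: inr n :: v) (u ++ inr (m + n)%Z :: v).

(* hat a = hat b in G * <t>: equivalence closure of the elementary moves. *)
Inductive word_equiv (G : IMGroup) : word G -> word G -> Prop :=
  | we_refl : forall a, word_equiv G a a
  | we_step : forall a b, word_step G a b -> word_equiv G a b
  | we_sym : forall a b, word_equiv G a b -> word_equiv G b a
  | we_trans : forall a b c, word_equiv G a b -> word_equiv G b c -> word_equiv G a c.

(* Graev distance of (the elements represented by) w1, w2 is < eps:
   the infimum over same-length representatives is below eps. *)
Definition graev_lt (G : IMGroup) (w1 w2 : word G) (eps : R) : Prop :=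
  exists a1 a2 : word G,
    length a1 = length a2 /\ word_equiv G a1 w1 /\ word_equiv G a2 w2 /\
    word_dist G a1 a2 < eps.

Definition gen_word (G : IMGroup) (A : carrier G -> Prop) (x : word G) : Prop :=
  (exists g, x = [inl g]) \/
  (exists a, A a /\ x = [inr 1%Z; inl a; inr (-1)%Z]).

(* Membership in the subgroup of G * <t> generated by G and tAt^{-1}
   (generating set is closed under inverses, so finite products suffice). *)
Definition in_GtAt (G : IMGroup) (A : carrier G -> Prop) (w : word G) : Prop :=
  exists ws : list (word G), Forall (gen_word G A) ws /\ word_equiv G w (concat ws).

Definition is_subgroup (G : IMGroup) (A : carrier G -> Prop) : Prop :=
  A (gone G) /\ (forall x y, A x -> A y -> A (gmul G x y)) /\
  (forall x, A x -> A (ginv G x)).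

Definition closed_in (G : IMGroup) (A : carrier G -> Prop) : Prop :=
  forall g, (forall eps, 0 < eps -> exists a, A a /\ gdist G g a < eps) -> A g.

(* Closedness of a (representative-saturated) set of words in the Graev metric. *)
Definition graev_closed (G : IMGroup) (S : word G -> Prop) : Prop :=
  forall w, (forall eps, 0 < eps -> exists h, S h /\ graev_lt G w h eps) -> S w.

(* A word w of G * <t> is recorded by its height sequence: the list of its
   letters g of G, each tagged with its height n, the exponent of t in front
   of it, so that w = t^n1 g1 t^-n1 ... t^nk gk t^-nk t^(texp w).  The word
   lies in G * tAt^-1 iff, up to the moves of height sequences (merging two
   adjacent entries of equal height, deleting an identity entry), texp w = 0
   and every entry is "allowed": anything at height 0, an element of A at
   height 1, the identity elsewhere.  A cost makes this quantitative:
   [reduces L c] says that L becomes, by merges and by deletions of entries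
   (n, x) at the price d(x, 1), a sequence within distance c of an allowed one.

   1. [reduces] is invariant under moves, hence depends only on the element
      of G * <t> (this uses that A is a subgroup);
   2. [reduces] is 1-Lipschitz under letterwise perturbation, and words at
      Graev distance < 1/2 carry the same powers of t, so a word Graev-close
      to G * tAt^-1 reduces at small cost;
   3. reducing at every positive cost implies reducing at cost 0, by a finite
      search in which every failure has a positive margin (A is closed);
   4. a reduction at cost 0 exhibits the word as a product of generators. *)

From Stdlib Require Import Reals ZArith List Lra Lia Classical.
Import ListNotations.
Open Scope R_scope.

Section InvariantMetric.
Variable G : IMGroup.
Local Notation d := (gdist G).
Local Notation mul := (gmul G).

Lemma gdist_refl (x : G) : d x x = 0.
Proof. now apply gdist_eq0. Qed.

Lemma gdist_nonneg (x y : G) : 0 <= d x y.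
Proof.
  pose proof (gdist_tri G x y x) as T.
  rewrite (gdist_sym G y x), gdist_refl in T; lra.
Qed.

(* Two-sided invariance makes multiplication 1-Lipschitz in each factor. *)
Lemma gdist_mul (x y x' y' : G) : d (mul x y) (mul x' y') <= d x x' + d y y'.
Proof.
  pose proof (gdist_tri G (mul x y) (mul x' y) (mul x' y')) as T.
  now rewrite gdist_rinv, gdist_linv in T.
Qed.

Lemma gdist_mul_l (x y : G) : d y (mul x y) = d x (gone G).
Proof. rewrite <- (gmul_1l G y) at 1. rewrite gdist_rinv. apply gdist_sym. Qed.

Lemma gdist_mul_r (x y : G) : d x (mul x y) = d y (gone G).
Proof. rewrite <- (gmul_1r G x) at 1. rewrite gdist_linv. apply gdist_sym. Qed.

End InvariantMetric.

Lemma app_cons_eq {T} (u v u' v' : list T) a a' :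
  u ++ a :: v = u' ++ a' :: v' ->
  (u = u' /\ a = a' /\ v = v') \/
  (exists m, u' = u ++ a :: m /\ v = m ++ a' :: v') \/
  (exists m, u = u' ++ a' :: m /\ v' = m ++ a :: v).
Proof.
  revert u'; induction u as [|b u IH]; intros [|b' u'] H; simpl in *;
    injection H; intros; subst.
  - now left.
  - right; left. now exists u'.
  - right; right. now exists u.
  - destruct (IH u' ltac:(assumption)) as [[-> [-> ->]]|[[m [-> ->]]|[m [-> ->]]]].
    + now left.
    + right; left. now exists m.
    + right; right. now exists m.
Qed.

Definition has_gap (P : R -> Prop) : Prop :=
  exists t, 0 < t /\ forall c, c < t -> ~ P c.

Lemma has_gap_finite {X} (l : list X) (P : X -> R -> Prop) :
  (forall x, In x l -> has_gap (P x)) ->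
  has_gap (fun c => exists x, In x l /\ P x c).
Proof.
  induction l as [|a l IH]; intros H.
  - exists 1; split; [lra|]. intros c _ [x [[] _]].
  - destruct (H a (or_introl eq_refl)) as [t1 [Ht1 H1]].
    destruct IH as [t2 [Ht2 H2]]; [intros x Hx; apply H; now right|].
    exists (Rmin t1 t2); split; [now apply Rmin_glb_lt|].
    pose proof (Rmin_l t1 t2); pose proof (Rmin_r t1 t2).
    intros c Hc [x [[<-|Hx] HP]].
    + apply (H1 c); [lra|exact HP].
    + apply (H2 c); [lra|eauto].
Qed.

Section HeightSequences.
Variable G : IMGroup.
Variable A : carrier G -> Prop.
Local Notation d := (gdist G).
Local Notation mul := (gmul G).
Local Notation one := (gone G).

(* An entry (n, g) is a letter g of G standing at height n, i.e. the
   element t^n g t^-n of G * <t>. *)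
Definition entry : Type := (Z * carrier G)%type.

Definition allowed (n : Z) (g : G) : Prop :=
  n = 0%Z \/ (n = 1%Z /\ A g) \/ g = one.

Definition all_allowed (L : list entry) : Prop :=
  Forall (fun e => allowed (fst e) (snd e)) L.

Inductive fits : list entry -> R -> Prop :=
| fits_nil : forall c, 0 <= c -> fits [] c
| fits_cons : forall n g a L c,
    allowed n a -> fits L (c - d g a) -> fits ((n, g) :: L) c.

Inductive reduces : list entry -> R -> Prop :=
| reduces_fits : forall L c, fits L c -> reduces L c
| reduces_merge : forall u v n x y c,
    reduces (u ++ (n, mul x y) :: v) c -> reduces (u ++ (n, x) :: (n, y) :: v) c
| reduces_delete : forall u v n x c,
    reduces (u ++ v) (c - d x one) -> reduces (u ++ (n, x) :: v) c.

Inductive perturb : list entry -> list entry -> R -> Prop :=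
| perturb_nil : forall p, 0 <= p -> perturb [] [] p
| perturb_cons : forall n x y L L' p,
    perturb L L' (p - d x y) -> perturb ((n, x) :: L) ((n, y) :: L') p.

Hypothesis A_subgroup : is_subgroup G A.

Lemma allowed_mul n x y : allowed n x -> allowed n y -> allowed n (mul x y).
Proof.
  destruct A_subgroup as [_ [A_mul _]].
  unfold allowed; intros [Hx|[[Hx Ax]|Hx]] [Hy|[[Hy Ay]|Hy]]; subst;
    rewrite ?gmul_1l, ?gmul_1r; auto.
Qed.

Lemma fits_nonneg L c : fits L c -> 0 <= c.
Proof. induction 1; auto. pose proof (gdist_nonneg G g a); lra. Qed.

Lemma fits_mono L c c' : fits L c -> c <= c' -> fits L c'.
Proof.
  intros H; revert c'; induction H; intros c' Hc.
  - constructor; lra.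
  - econstructor; eauto. apply IHfits; lra.
Qed.

Lemma fits_app u v c1 c2 : fits u c1 -> fits v c2 -> fits (u ++ v) (c1 + c2).
Proof.
  induction 1 as [c Hc|n g a L c Ha H IH]; intros Hv; simpl.
  - eapply fits_mono; eauto; lra.
  - econstructor; eauto.
    replace (c + c2 - d g a) with (c - d g a + c2) by ring; auto.
Qed.

Lemma fits_split u v c : fits (u ++ v) c -> exists c1, fits u c1 /\ fits v (c - c1).
Proof.
  revert c; induction u as [|[n g] u IH]; intros c H; simpl in *.
  - exists 0; split; [constructor; lra|]. now rewrite Rminus_0_r.
  - inversion H as [|? ? a ? ? Ha Hr]; subst.
    destruct (IH _ Hr) as [c1 [H1 H2]].
    exists (d g a + c1); split.
    + econstructor; eauto. now replace (d g a + c1 - d g a) with c1 by ring.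
    + now replace (c - (d g a + c1)) with (c - d g a - c1) by ring.
Qed.

Lemma fits_zero_allowed L c : fits L c -> c <= 0 -> all_allowed L.
Proof.
  induction 1 as [c Hc|n g a L c Ha H IH]; intros Hc0; constructor.
  - pose proof (fits_nonneg _ _ H); pose proof (gdist_nonneg G g a).
    assert (E : d g a = 0) by lra. apply gdist_eq0 in E; subst; auto.
  - apply IH. pose proof (gdist_nonneg G g a); lra.
Qed.

Lemma perturb_mono L L' p p' : perturb L L' p -> p <= p' -> perturb L L' p'.
Proof.
  intros H; revert p'; induction H; intros p' Hp; constructor; try lra.
  apply IHperturb; lra.
Qed.

Lemma perturb_refl L : perturb L L 0.
Proof.
  induction L as [|[n g] L IH]; constructor; [lra|].
  now rewrite gdist_refl, Rminus_0_r.
Qed.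

Lemma perturb_sym L L' p : perturb L L' p -> perturb L' L p.
Proof. induction 1; constructor; auto. now rewrite gdist_sym. Qed.

Lemma perturb_app u u' v v' p1 p2 :
  perturb u u' p1 -> perturb v v' p2 -> perturb (u ++ v) (u' ++ v') (p1 + p2).
Proof.
  induction 1 as [p Hp|n x y L L' p H IH]; intros Hv; simpl.
  - eapply perturb_mono; eauto; lra.
  - constructor. replace (p + p2 - d x y) with (p - d x y + p2) by ring; auto.
Qed.

Lemma perturb_split u v L p : perturb (u ++ v) L p ->
  exists u' v' p1, L = u' ++ v' /\ perturb u u' p1 /\ perturb v v' (p - p1).
Proof.
  revert L p; induction u as [|[n g] u IH]; intros L p H; simpl in *.
  - exists [], L, 0. repeat split; [constructor; lra|]. now rewrite Rminus_0_r.
  - inversion H as [|? ? y ? L' ? Hr]; subst.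
    destruct (IH _ _ Hr) as [u' [v' [p1 [-> [H1 H2]]]]].
    exists ((n, y) :: u'), v', (d g y + p1). repeat split.
    + constructor. now replace (d g y + p1 - d g y) with p1 by ring.
    + now replace (p - (d g y + p1)) with (p - d g y - p1) by ring.
Qed.

Lemma fits_perturb L c L' p : fits L c -> perturb L L' p -> fits L' (c + p).
Proof.
  intros H; revert L' p; induction H as [c Hc|n g a L c Ha H IH];
    intros L' p HP; inversion HP as [|? ? y ? L'' ? Hr]; subst.
  - constructor; lra.
  - econstructor; eauto. eapply fits_mono; [exact (IH _ _ Hr)|].
    pose proof (gdist_tri G y g a); rewrite (gdist_sym G y g) in *; lra.
Qed.

Lemma reduces_nonneg L c : reduces L c -> 0 <= c.
Proof.
  induction 1; eauto using fits_nonneg.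
  pose proof (gdist_nonneg G x one); lra.
Qed.

Lemma reduces_mono L c c' : reduces L c -> c <= c' -> reduces L c'.
Proof.
  intros H; revert c'; induction H; intros c' Hc.
  - constructor; eapply fits_mono; eauto.
  - apply reduces_merge; auto.
  - apply reduces_delete, IHreduces; lra.
Qed.

Lemma reduces_perturb L c L' p : reduces L c -> perturb L L' p -> reduces L' (c + p).
Proof.
  intros H; revert L' p; induction H as [L c HF|u v n x y c H IH|u v n x c H IH];
    intros L' p HP.
  - constructor; eapply fits_perturb; eauto.
  - destruct (perturb_split _ _ _ _ HP) as [u' [w' [p1 [-> [Hu Hw]]]]].
    inversion Hw as [|? ? x' ? L1 ? Hr1]; subst.
    inversion Hr1 as [|? ? y' ? L2 ? Hr2]; subst.
    apply reduces_merge.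
    pose proof (gdist_mul G x y x' y').
    assert (Hxy : perturb ((n, mul x y) :: v) ((n, mul x' y') :: L2) (p - p1)).
    { constructor; eapply perturb_mono; [exact Hr2|lra]. }
    eapply reduces_mono; [exact (IH _ _ (perturb_app _ _ _ _ _ _ Hu Hxy))|lra].
  - destruct (perturb_split _ _ _ _ HP) as [u' [w' [p1 [-> [Hu Hw]]]]].
    inversion Hw as [|? ? y ? L1 ? Hr1]; subst.
    apply reduces_delete.
    eapply reduces_mono; [exact (IH _ _ (perturb_app _ _ _ _ _ _ Hu Hr1))|].
    pose proof (gdist_tri G y x one); rewrite (gdist_sym G y x) in *; lra.
Qed.

(* The cost-free moves of height sequences: the shadow of the relations
   g h = gh and 1 = (empty word) of G * <t>. *)
Inductive hmove : list entry -> list entry -> Prop :=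
| hmove_merge : forall u v n x y,
    hmove (u ++ (n, x) :: (n, y) :: v) (u ++ (n, mul x y) :: v)
| hmove_delete : forall u v n, hmove (u ++ (n, one) :: v) (u ++ v).

Lemma hmove_merge_eq u v n x y L1 L2 :
  L1 = u ++ (n, x) :: (n, y) :: v -> L2 = u ++ (n, mul x y) :: v -> hmove L1 L2.
Proof. intros -> ->; constructor. Qed.

Lemma hmove_delete_eq u v n L1 L2 :
  L1 = u ++ (n, one) :: v -> L2 = u ++ v -> hmove L1 L2.
Proof. intros -> ->; constructor. Qed.

Lemma reduces_merge_eq u v n x y c L :
  reduces (u ++ (n, mul x y) :: v) c -> L = u ++ (n, x) :: (n, y) :: v -> reduces L c.
Proof. intros H ->; now apply reduces_merge. Qed.

Lemma reduces_delete_eq u v n x c L :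
  reduces (u ++ v) (c - d x one) -> L = u ++ (n, x) :: v -> reduces L c.
Proof. intros H ->; now apply reduces_delete. Qed.

Ltac assoc_right := repeat (rewrite <- app_assoc; simpl).
Ltac assoc_right_in H := repeat (rewrite <- app_assoc in H; simpl in H).

Lemma reduces_hmove_back L1 L2 c : hmove L1 L2 -> reduces L2 c -> reduces L1 c.
Proof.
  intros [u v n x y|u v n] H.
  - now apply reduces_merge.
  - apply reduces_delete. rewrite gdist_refl. eapply reduces_mono; eauto; lra.
Qed.

(* A move keeps a sequence fitting: merging two entries close to allowed
   a1, a2 gives an entry close to the allowed a1 a2, and deleting an entry
   close to an allowed one only saves cost. *)
Lemma fits_hmove L1 L2 c : hmove L1 L2 -> fits L1 c -> fits L2 c.
Proof.
  intros [u v n x y|u v n] HF.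
  - destruct (fits_split _ _ _ HF) as [c1 [H1 H2]].
    inversion H2 as [|? ? a1 ? ? Ha1 Hr1]; subst.
    inversion Hr1 as [|? ? a2 ? ? Ha2 Hr2]; subst.
    replace c with (c1 + (c - c1)) by ring. apply fits_app; auto.
    apply fits_cons with (a := mul a1 a2); [now apply allowed_mul|].
    eapply fits_mono; eauto. pose proof (gdist_mul G x y a1 a2); lra.
  - destruct (fits_split _ _ _ HF) as [c1 [H1 H2]].
    inversion H2 as [|? ? a1 ? ? Ha1 Hr1]; subst.
    eapply fits_mono; [apply fits_app; eauto|].
    pose proof (gdist_nonneg G one a1); lra.
Qed.

(* A move applied after a merge step of a reduction: either it is the same
   merge, it overlaps it (associativity, or a neutral factor), or it acts
   elsewhere and commutes with it. *)
Lemma merge_then_hmove u v n x y c L2 :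
  reduces (u ++ (n, mul x y) :: v) c ->
  (forall L, hmove (u ++ (n, mul x y) :: v) L -> reduces L c) ->
  hmove (u ++ (n, x) :: (n, y) :: v) L2 -> reduces L2 c.
Proof.
  intros H IH HS. remember (u ++ (n, x) :: (n, y) :: v) as L1 eqn:E.
  destruct HS as [u' v' n' x' y'|u' v' n']; symmetry in E.
  - destruct (app_cons_eq _ _ _ _ _ _ E) as [[-> [E1 E2]]|[[m [-> E2]]|[m [-> E2]]]].
    + injection E1; injection E2; intros; subst. exact H.
    + destruct m as [|b m]; simpl in E2; injection E2; intros; subst.
      * assoc_right. apply reduces_merge. rewrite gmul_assoc.
        apply IH. eapply (hmove_merge_eq u); assoc_right; reflexivity.
      * assoc_right. apply reduces_merge.
        apply IH.
        eapply (hmove_merge_eq (u ++ (n, mul x y) :: m)); assoc_right; reflexivity.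
    + destruct m as [|b m]; simpl in E2; injection E2; intros; subst.
      * assoc_right. apply reduces_merge. rewrite <- gmul_assoc.
        apply IH. eapply (hmove_merge_eq u'); assoc_right; reflexivity.
      * eapply (reduces_merge_eq (u' ++ (n', mul x' y') :: m)); [|assoc_right; reflexivity].
        assoc_right. apply IH. eapply (hmove_merge_eq u'); assoc_right; reflexivity.
  - destruct (app_cons_eq _ _ _ _ _ _ E) as [[-> [E1 E2]]|[[m [-> E2]]|[m [-> E2]]]].
    + injection E1; intros; subst. now rewrite gmul_1l in H.
    + destruct m as [|b m]; simpl in E2; injection E2; intros; subst.
      * rewrite gmul_1r in H. now assoc_right.
      * assoc_right. apply reduces_merge.
        apply IH.
        eapply (hmove_delete_eq (u ++ (n, mul x y) :: m)); assoc_right; reflexivity.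
    + subst. eapply (reduces_merge_eq (u' ++ m)); [|assoc_right; reflexivity].
      apply IH. eapply (hmove_delete_eq u'); assoc_right; reflexivity.
Qed.

Lemma perturb_one u v n x y :
  perturb (u ++ (n, x) :: v) (u ++ (n, y) :: v) (d x y).
Proof.
  replace (d x y) with (0 + d x y) by ring.
  apply perturb_app; [apply perturb_refl|].
  constructor. rewrite Rminus_diag. apply perturb_refl.
Qed.

(* A move applied after a deletion step of a reduction: if it merges the
   deleted letter x into a neighbour, the result is a perturbation of size
   d x 1 of the sequence left by the deletion; otherwise the two commute. *)
Lemma delete_then_hmove u v n x c L2 :
  reduces (u ++ v) (c - d x one) ->
  (forall L, hmove (u ++ v) L -> reduces L (c - d x one)) ->
  hmove (u ++ (n, x) :: v) L2 -> reduces L2 c.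
Proof.
  intros H IH HS. remember (u ++ (n, x) :: v) as L1 eqn:E.
  destruct HS as [u' v' n' x' y'|u' v' n']; symmetry in E.
  - destruct (app_cons_eq _ _ _ _ _ _ E) as [[-> [E1 E2]]|[[m [-> E2]]|[m [-> E2]]]].
    + injection E1; intros; subst.
      pose proof (reduces_perturb _ _ _ _ H (perturb_one u' v' n' y' (mul x' y'))) as R.
      rewrite gdist_mul_l in R. eapply reduces_mono; [exact R|lra].
    + subst. assoc_right. apply reduces_delete. apply IH.
      eapply (hmove_merge_eq (u ++ m)); assoc_right; reflexivity.
    + destruct m as [|b m]; simpl in E2; injection E2; intros; subst.
      * assoc_right_in H.
        pose proof (reduces_perturb _ _ _ _ H (perturb_one u' v n x' (mul x' x))) as R.
        rewrite gdist_mul_r in R. eapply reduces_mono; [exact R|lra].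
      * eapply (reduces_delete_eq (u' ++ (n', mul x' y') :: m)); [|assoc_right; reflexivity].
        assoc_right. apply IH. eapply (hmove_merge_eq u'); assoc_right; reflexivity.
  - destruct (app_cons_eq _ _ _ _ _ _ E) as [[-> [E1 E2]]|[[m [-> E2]]|[m [-> E2]]]].
    + injection E1; intros; subst. rewrite gdist_refl in H.
      eapply reduces_mono; [exact H|lra].
    + subst. assoc_right. apply reduces_delete. apply IH.
      eapply (hmove_delete_eq (u ++ m)); assoc_right; reflexivity.
    + subst. eapply (reduces_delete_eq (u' ++ m)); [|assoc_right; reflexivity].
      apply IH. eapply (hmove_delete_eq u'); assoc_right; reflexivity.
Qed.

Lemma reduces_hmove L1 L2 c : hmove L1 L2 -> (reduces L1 c <-> reduces L2 c).
Proof.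
  intros HS; split; [|now apply reduces_hmove_back].
  intros H; revert L2 HS.
  induction H as [L c HF|u v n x y c H IH|u v n x c H IH]; intros L2 HS.
  - constructor; eapply fits_hmove; eauto.
  - eapply merge_then_hmove; eauto.
  - eapply delete_then_hmove; eauto.
Qed.

Fixpoint successors (L : list entry) : list (list entry * R) :=
  match L with
  | [] => []
  | (n, x) :: r =>
    (r, d x one) ::
    (match r with
     | (n', y) :: r' => if Z.eq_dec n n' then [((n, mul x y) :: r', 0)] else []
     | [] => []
     end) ++
    map (fun s => ((n, x) :: fst s, snd s)) (successors r)
  end.

Lemma successors_spec L s : In s (successors L) ->
  (length (fst s) < length L)%nat /\ 0 <= snd s /\
  (forall u c, reduces (u ++ fst s) c -> reduces (u ++ L) (c + snd s)).
Proof.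
  revert s; induction L as [|[n x] r IH]; intros s Hs; simpl in Hs; [contradiction|].
  destruct Hs as [<-|Hs]; [|apply in_app_or in Hs; destruct Hs as [Hs|Hs]].
  - simpl. repeat split; [lia|apply gdist_nonneg|].
    intros u c H. apply reduces_delete.
    now replace (c + d x one - d x one) with c by ring.
  - destruct r as [|[n' y] r']; [contradiction|].
    destruct (Z.eq_dec n n') as [<-|]; [|contradiction].
    destruct Hs as [<-|[]]. simpl. repeat split; [lia|lra|].
    intros u c H. apply reduces_merge. now rewrite Rplus_0_r.
  - apply in_map_iff in Hs. destruct Hs as [s' [<- Hs']].
    destruct (IH s' Hs') as [H1 [H2 H3]]. simpl.
    split; [apply -> Nat.succ_lt_mono; exact H1|split; [exact H2|]].
    intros u c H. specialize (H3 (u ++ [(n, x)]) c).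
    rewrite <- !app_assoc in H3; simpl in H3. now apply H3.
Qed.

Lemma reduces_inv L c : reduces L c ->
  fits L c \/ exists s, In s (successors L) /\ reduces (fst s) (c - snd s).
Proof.
  intros [L' c' HF|u v n x y c' H|u v n x c' H]; [now left|right|right].
  - exists (u ++ (n, mul x y) :: v, 0); split; [clear H|simpl; now rewrite Rminus_0_r].
    induction u as [|[m z] u IHu]; simpl.
    + right. apply in_or_app; left.
      destruct (Z.eq_dec n n); [now left|congruence].
    + right. apply in_or_app; right.
      exact (in_map (fun s => ((m, z) :: fst s, snd s)) _ (_, 0) IHu).
  - exists (u ++ v, d x one); split; [clear H|exact H].
    induction u as [|[m z] u IHu]; simpl; [now left|].
    right. apply in_or_app; right.
    exact (in_map (fun s => ((m, z) :: fst s, snd s)) _ (_, d x one) IHu).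
Qed.

Hypothesis A_closed : closed_in G A.

(* Since A is closed, a non-allowed entry is at positive distance from
   every allowed letter of its height. *)
Lemma allowed_gap n g : ~ allowed n g ->
  exists t, 0 < t /\ forall a, allowed n a -> t <= d g a.
Proof.
  intros Hn. apply NNPP; intros Hno.
  assert (Hnear : forall t, 0 < t -> exists a, allowed n a /\ d g a < t).
  { intros t Ht. apply NNPP; intros Hx. apply Hno. exists t; split; auto.
    intros a Ha. apply Rnot_lt_le; intros Hlt. apply Hx; eauto. }
  apply Hn. unfold allowed.
  destruct (Z.eq_dec n 0) as [|H0]; [now left|].
  destruct (Z.eq_dec n 1) as [->|H1].
  - right; left; split; auto. apply A_closed. intros eps He.
    destruct (Hnear eps He) as [a [[Ha|[[_ Ha]|Ha]] Hd]]; [lia| |];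
      exists a; split; auto.
    subst a; apply A_subgroup.
  - right; right. apply gdist_eq0, Rle_antisym; [|apply gdist_nonneg].
    apply Rnot_lt_le; intros Hlt.
    destruct (Hnear _ Hlt) as [a [[Ha|[[Ha _]| ->]] Hd]]; [lia|lia|lra].
Qed.

Lemma fits_gap L : ~ fits L 0 -> has_gap (fits L).
Proof.
  induction L as [|[n g] r IH]; intros Hn.
  - exfalso; apply Hn; constructor; lra.
  - destruct (classic (allowed n g)) as [Ha|Ha].
    + assert (Hr : ~ fits r 0).
      { intros Hr. apply Hn. apply fits_cons with (a := g); auto.
        now rewrite gdist_refl, Rminus_0_r. }
      destruct (IH Hr) as [t [Ht Hf]]. exists t; split; auto.
      intros c Hc HF. inversion HF as [|? ? a ? ? Ha' Hr']; subst.
      apply (Hf (c - d g a)); auto. pose proof (gdist_nonneg G g a); lra.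
    + destruct (allowed_gap _ _ Ha) as [t [Ht Hf]]. exists t; split; auto.
      intros c Hc HF. inversion HF as [|? ? a ? ? Ha' Hr']; subst.
      apply fits_nonneg in Hr'. specialize (Hf a Ha'). lra.
Qed.

(* Induction on the length: L is either a fit, which has a gap, or reduces
   through one of finitely many successors, each of which has a gap. *)
Lemma reduces_gap L : ~ reduces L 0 -> has_gap (reduces L).
Proof.
  remember (length L) as N eqn:HN. revert L HN.
  induction N as [N IHN] using lt_wf_ind; intros L HN Hn.
  destruct (fits_gap L) as [t1 [Ht1 Hf1]]; [intros HF; apply Hn; now constructor|].
  destruct (has_gap_finite (successors L) (fun s c => reduces (fst s) (c - snd s)))
    as [t2 [Ht2 Hf2]].
  { intros s Hs. destruct (successors_spec _ _ Hs) as [Hlen [Hnn Hlift]].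
    destruct (classic (reduces (fst s) 0)) as [H0|H0].
    - destruct (Req_dec (snd s) 0) as [E|E].
      + exfalso. apply Hn. specialize (Hlift [] 0 H0). simpl in Hlift.
        now rewrite E, Rplus_0_r in Hlift.
      + exists (snd s); split; [lra|]. intros c Hc HR.
        apply reduces_nonneg in HR; lra.
    - destruct (IHN (length (fst s)) ltac:(lia) (fst s) eq_refl H0) as [t [Ht Hf]].
      exists t; split; auto. intros c Hc. apply Hf; lra. }
  exists (Rmin t1 t2); split; [now apply Rmin_glb_lt|].
  pose proof (Rmin_l t1 t2); pose proof (Rmin_r t1 t2).
  intros c Hc HR. destruct (reduces_inv _ _ HR) as [HF|[s [Hs HR']]].
  - apply (Hf1 c); [lra|exact HF].
  - apply (Hf2 c); [lra|eauto].
Qed.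

Lemma reduces_closed L : (forall eps, 0 < eps -> reduces L eps) -> reduces L 0.
Proof.
  intros H. apply NNPP; intros Hn.
  destruct (reduces_gap L Hn) as [t [Ht Hf]].
  apply (Hf (t / 2)); [lra|]. apply H; lra.
Qed.

End HeightSequences.

Section Words.
Variable G : IMGroup.
Local Notation one := (gone G).
Local Notation mul := (gmul G).
Local Notation "a ≡ b" := (word_equiv G a b) (at level 70).

Lemma equiv_ctx u v a b : a ≡ b -> u ++ a ++ v ≡ u ++ b ++ v.
Proof.
  induction 1 as [a|a b H|a b H IH|a b c H1 IH1 H2 IH2].
  - apply we_refl.
  - apply we_step. destruct H as [u0 v0|u0 v0|u0 v0 g h|u0 v0 m n];
      rewrite !app_assoc, <- !(app_assoc (u ++ u0)); simpl; constructor.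
  - now apply we_sym.
  - eapply we_trans; eauto.
Qed.

Lemma equiv_app a a' b b' : a ≡ a' -> b ≡ b' -> a ++ b ≡ a' ++ b'.
Proof.
  intros Ha Hb. apply we_trans with (a' ++ b).
  - exact (equiv_ctx [] b a a' Ha).
  - pose proof (equiv_ctx a' [] b b' Hb) as H; now rewrite !app_nil_r in H.
Qed.

Lemma equiv_letters_G g h : [inl g; inl h] ≡ [inl (mul g h)].
Proof. apply we_step, (ws_mul1 G []). Qed.

Lemma equiv_letters_t m n : [inr m; inr n] ≡ [@inr (carrier G) Z (m + n)%Z].
Proof. apply we_step, (ws_mul2 G []). Qed.

Lemma equiv_one : [@inl (carrier G) Z one] ≡ [].
Proof. apply we_step, (ws_del1 G [] []). Qed.

Lemma equiv_t_zero : [@inr (carrier G) Z 0%Z] ≡ [].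
Proof. apply we_step, (ws_del2 G [] []). Qed.

Lemma equiv_t_cancel m n : (m + n = 0)%Z -> [@inr (carrier G) Z m; inr n] ≡ [].
Proof.
  intros E. eapply we_trans; [apply equiv_letters_t|]. rewrite E. apply equiv_t_zero.
Qed.

Fixpoint texp (w : word G) : Z :=
  match w with
  | [] => 0%Z
  | inl _ :: r => texp r
  | inr m :: r => (m + texp r)%Z
  end.

(* The height sequence of w, started at height h: each letter g of G is
   recorded with the exponent of t preceding it; a letter t^0 is recorded
   as an identity entry, so that its deletion is a move of height sequences. *)
Fixpoint heights (h : Z) (w : word G) : list (entry G) :=
  match w with
  | [] => []
  | inl g :: r => (h, g) :: heights h r
  | inr m :: r => if Z.eq_dec m 0 then (h, one) :: heights h r else heights (h + m)%Z r
  end.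

Lemma texp_app u v : texp (u ++ v) = (texp u + texp v)%Z.
Proof. induction u as [|[g|m] u IH]; simpl; lia. Qed.

Lemma heights_app h u v : heights h (u ++ v) = heights h u ++ heights (h + texp u)%Z v.
Proof.
  revert h; induction u as [|[g|m] u IH]; intros h; simpl.
  - now rewrite Z.add_0_r.
  - now rewrite IH.
  - destruct (Z.eq_dec m 0) as [->|Hm]; simpl; rewrite IH; f_equal; f_equal; lia.
Qed.

Lemma texp_equiv a b : a ≡ b -> texp a = texp b.
Proof.
  induction 1 as [|a b []| |]; auto; [rewrite !texp_app; simpl; lia ..|congruence].
Qed.

Lemma step_heights a b h : word_step G a b ->
  heights h a = heights h b \/ hmove G (heights h a) (heights h b) \/
  hmove G (heights h b) (heights h a).
Proof.
  intros [u v|u v|u v g k|u v m n]; rewrite !heights_app; simpl.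
  - right; left. apply hmove_delete.
  - destruct (Z.eq_dec 0 0); [|congruence]. right; left. apply hmove_delete.
  - right; left. apply hmove_merge.
  - set (h' := (h + texp u)%Z).
    destruct (Z.eq_dec m 0) as [->|Hm]; [right; left; apply hmove_delete|].
    destruct (Z.eq_dec n 0) as [->|Hn].
    + rewrite Z.add_0_r. destruct (Z.eq_dec m 0); [congruence|].
      right; left. apply hmove_delete.
    + destruct (Z.eq_dec (m + n) 0) as [E|E].
      * replace (h' + m + n)%Z with h' by lia. right; right. apply hmove_delete.
      * left. now rewrite Z.add_assoc.
Qed.

Definition conj_word (e : entry G) : word G := [inr (fst e); inl (snd e); inr (- fst e)%Z].

Definition word_of (L : list (entry G)) : word G := concat (map conj_word L).

Lemma word_of_app u v : word_of (u ++ v) = word_of u ++ word_of v.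
Proof. unfold word_of. now rewrite map_app, concat_app. Qed.

Lemma word_of_hmove L1 L2 : hmove G L1 L2 -> word_of L1 ≡ word_of L2.
Proof.
  intros [u v n x y|u v n]; rewrite !word_of_app;
    apply equiv_app; try apply we_refl; simpl.
  - set (r := inr (- n)%Z :: word_of v).
    eapply we_trans.
    + exact (equiv_ctx [inr n; inl x] (inl y :: r) [inr (- n)%Z; inr n] []
               (equiv_t_cancel _ _ (Z.add_opp_diag_l n))).
    + exact (equiv_ctx [inr n] r [inl x; inl y] [inl (mul x y)] (equiv_letters_G x y)).
  - eapply we_trans.
    + exact (equiv_ctx [inr n] (inr (- n)%Z :: word_of v) _ [] equiv_one).
    + exact (equiv_ctx [] (word_of v) [inr n; inr (- n)%Z] []
               (equiv_t_cancel _ _ (Z.add_opp_diag_r n))).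
Qed.

Lemma word_of_heights h w :
  word_of (heights h w) ++ [inr (h + texp w)%Z] ≡ inr h :: w.
Proof.
  revert h; induction w as [|[g|m] r IH]; intros h; simpl.
  - rewrite Z.add_0_r. apply we_refl.
  - pose proof (equiv_t_cancel _ _ (Z.add_opp_diag_l h)) as Hcancel.
    eapply we_trans.
    + exact (equiv_app [inr h; inl g; inr (- h)%Z] _ _ _ (we_refl _ _) (IH h)).
    + exact (equiv_ctx [inr h; inl g] r _ _ Hcancel).
  - destruct (Z.eq_dec m 0) as [->|Hm]; simpl.
    + pose proof (equiv_t_cancel _ _ (Z.add_opp_diag_l h)) as Hcancel.
      eapply we_trans.
      { exact (equiv_app [inr h; inl one; inr (- h)%Z] _ _ _ (we_refl _ _) (IH h)). }
      eapply we_trans; [exact (equiv_ctx [inr h] _ [inl one] [] equiv_one)|].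
      eapply we_trans; [exact (equiv_ctx [inr h] r _ _ Hcancel)|].
      apply we_sym. exact (equiv_ctx [inr h] r [inr 0%Z] [] equiv_t_zero).
    + rewrite Z.add_assoc. eapply we_trans; [apply IH|].
      apply we_sym. exact (equiv_ctx [] r _ _ (equiv_letters_t h m)).
Qed.

Lemma word_of_heights_0 w : texp w = 0%Z -> w ≡ word_of (heights 0 w).
Proof.
  intros E. pose proof (word_of_heights 0 w) as H. rewrite E in H. simpl in H.
  apply we_sym. eapply we_trans; [|eapply we_trans; [exact H|]].
  - pose proof (equiv_ctx (word_of (heights 0 w)) [] [inr 0%Z] [] equiv_t_zero) as H0.
    simpl in H0; rewrite !app_nil_r in H0. now apply we_sym.
  - exact (equiv_ctx [] w [inr 0%Z] [] equiv_t_zero).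
Qed.

Variable A : carrier G -> Prop.
Hypothesis A_subgroup : is_subgroup G A.

Lemma reduces_equiv a b : a ≡ b ->
  forall h c, reduces G A (heights h a) c <-> reduces G A (heights h b) c.
Proof.
  induction 1 as [a|a b H|a b H IH|a b c' H1 IH1 H2 IH2]; intros h c.
  - reflexivity.
  - destruct (step_heights _ _ h H) as [E|[E|E]].
    + now rewrite E.
    + now apply reduces_hmove.
    + symmetry; now apply reduces_hmove.
  - now rewrite IH.
  - now rewrite IH1.
Qed.

(* A reduction at cost 0 turns L, by relations of G * <t>, into an allowed
   sequence: its deletions are then deletions of identity letters. *)
Lemma reduces_zero_word L c : reduces G A L c -> c <= 0 ->
  exists L', all_allowed G A L' /\ word_of L ≡ word_of L'.
Proof.
  induction 1 as [L c HF|u v n x y c H IH|u v n x c H IH]; intros Hc.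
  - exists L; split; [eapply fits_zero_allowed; eauto|apply we_refl].
  - destruct (IH Hc) as [L' [HL' HE]]. exists L'; split; [exact HL'|].
    eapply we_trans; [apply word_of_hmove, hmove_merge|exact HE].
  - pose proof (reduces_nonneg _ _ _ _ H); pose proof (gdist_nonneg G x one).
    assert (E : gdist G x one = 0) by lra. apply gdist_eq0 in E; subst x.
    destruct (IH ltac:(lra)) as [L' [HL' HE]]. exists L'; split; [exact HL'|].
    eapply we_trans; [apply word_of_hmove, hmove_delete|exact HE].
Qed.

Definition gen_of_entry (e : entry G) : word G :=
  if Z.eq_dec (fst e) 1 then [inr 1%Z; inl (snd e); inr (-1)%Z] else [inl (snd e)].

Lemma allowed_gen_of_entry e : allowed G A (fst e) (snd e) ->
  gen_word G A (gen_of_entry e) /\ conj_word e ≡ gen_of_entry e.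
Proof.
  destruct e as [n g]; unfold gen_of_entry, gen_word, conj_word; simpl.
  destruct A_subgroup as [A_one _].
  destruct (Z.eq_dec n 1) as [->|Hn]; intros [Hn0|[[Hn1 Ag]| ->]].
  - lia.
  - split; [right; now exists g|apply we_refl].
  - split; [right; now exists one|apply we_refl].
  - subst n. split; [left; now exists g|].
    eapply we_trans; [exact (equiv_ctx [] _ _ [] equiv_t_zero)|].
    exact (equiv_ctx [inl g] [] _ [] equiv_t_zero).
  - lia.
  - split; [left; now exists one|].
    eapply we_trans; [exact (equiv_ctx [inr n] _ _ [] equiv_one)|].
    eapply we_trans; [exact (equiv_t_cancel _ _ (Z.add_opp_diag_r n))|].
    apply we_sym, equiv_one.
Qed.

Lemma allowed_generators L : all_allowed G A L ->
  Forall (gen_word G A) (map gen_of_entry L) /\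
  word_of L ≡ concat (map gen_of_entry L).
Proof.
  induction 1 as [|e L He HL [IHg IHe]]; simpl; [split; [constructor|apply we_refl]|].
  destruct (allowed_gen_of_entry e He) as [Hg He'].
  split; [now constructor|]. exact (equiv_app _ _ _ _ He' IHe).
Qed.

Lemma generators_fit ws : Forall (gen_word G A) ws ->
  texp (concat ws) = 0%Z /\ fits G A (heights 0 (concat ws)) 0.
Proof.
  induction 1 as [|x ws Hx HF [IH1 IH2]]; simpl; [split; [reflexivity|constructor; lra]|].
  rewrite texp_app, heights_app.
  destruct Hx as [[g ->]|[a [Ha ->]]]; simpl.
  - split; [exact IH1|]. rewrite <- (Rplus_0_r 0).
    apply (fits_app _ _ [(0%Z, g)]); [|exact IH2].
    apply fits_cons with (a := g); [now left|]. rewrite gdist_refl. constructor; lra.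
  - rewrite IH1. split; [reflexivity|]. simpl.
    rewrite <- (Rplus_0_r 0).
    apply (fits_app _ _ [(1%Z, a)]); [|exact IH2].
    apply fits_cons with (a := a); [right; now left|]. rewrite gdist_refl. constructor; lra.
Qed.

End Words.

Section GraevDistance.
Variable G : IMGroup.
Local Notation one := (gone G).

Lemma letter_dist_nonneg (x y : letter G) : 0 <= letter_dist G x y.
Proof.
  destruct x as [g|m], y as [h|n]; simpl.
  - apply gdist_nonneg.
  - pose proof (gdist_nonneg G g one); pose proof (Rabs_pos (IZR n)); lra.
  - pose proof (gdist_nonneg G one h); pose proof (Rabs_pos (IZR m)); lra.
  - apply Rabs_pos.
Qed.

Lemma word_dist_cons x y a b :
  word_dist G (x :: a) (y :: b) = letter_dist G x y + word_dist G a b.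
Proof. reflexivity. Qed.

Lemma word_dist_nonneg a b : 0 <= word_dist G a b.
Proof.
  revert b; induction a as [|x a IH]; intros [|y b]; try (unfold word_dist; simpl; lra).
  rewrite word_dist_cons. pose proof (letter_dist_nonneg x y); pose proof (IH b); lra.
Qed.

Lemma Rabs_IZR_ge_1 z : z <> 0%Z -> 1 <= Rabs (IZR z).
Proof. intros Hz. rewrite Rabs_Zabs. apply IZR_le. lia. Qed.

(* At letterwise distance < 1, two words of equal length carry the same
   powers of t at the same places, except that t^0 may face a letter of G. *)
Lemma close_words_heights a b h : length a = length b -> word_dist G a b < 1 ->
  perturb G (heights G h a) (heights G h b) (word_dist G a b) /\ texp G a = texp G b.
Proof.
  revert b h; induction a as [|x a IH]; intros [|y b] h Hl Hd; simpl in Hl; try discriminate.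
  - split; [constructor; unfold word_dist; simpl; lra|reflexivity].
  - injection Hl as Hl. rewrite word_dist_cons in *.
    pose proof (letter_dist_nonneg x y); pose proof (word_dist_nonneg a b).
    destruct x as [g|m], y as [g'|n]; simpl in *.
    + destruct (IH b h Hl ltac:(lra)) as [HP HS]. split; [|exact HS]. constructor.
      now replace (gdist G g g' + word_dist G a b - gdist G g g') with (word_dist G a b) by ring.
    + destruct (Z.eq_dec n 0) as [->|Hn].
      * destruct (IH b h Hl ltac:(lra)) as [HP HS]. split; [|lia]. constructor.
        eapply perturb_mono; [exact HP|]. pose proof (Rabs_pos (IZR 0)); lra.
      * pose proof (Rabs_IZR_ge_1 _ Hn); pose proof (gdist_nonneg G g one); lra.
    + destruct (Z.eq_dec m 0) as [->|Hm].
      * destruct (IH b h Hl ltac:(lra)) as [HP HS]. split; [|lia]. constructor.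
        eapply perturb_mono; [exact HP|]. pose proof (Rabs_pos (IZR 0)); lra.
      * pose proof (Rabs_IZR_ge_1 _ Hm); pose proof (gdist_nonneg G one g'); lra.
    + destruct (Z.eq_dec m n) as [<-|Hmn].
      * destruct (Z.eq_dec m 0) as [->|Hm].
        -- destruct (IH b h Hl ltac:(lra)) as [HP HS]. split; [|lia]. constructor.
           rewrite gdist_refl. eapply perturb_mono; [exact HP|lra].
        -- destruct (IH b (h + m)%Z Hl ltac:(lra)) as [HP HS]. split; [|lia].
           eapply perturb_mono; [exact HP|lra].
      * assert (Hmn' : (m - n <> 0)%Z) by lia. pose proof (Rabs_IZR_ge_1 _ Hmn'); lra.
Qed.

Lemma graev_near_reduces (A : carrier G -> Prop) w h eps :
  is_subgroup G A -> in_GtAt G A h -> graev_lt G w h eps -> eps <= 1 / 2 ->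
  texp G w = 0%Z /\ reduces G A (heights G 0 w) eps.
Proof.
  intros HA [ws [Hws Hh]] [a1 [a2 [Hl [E1 [E2 Hd]]]]] Heps.
  destruct (generators_fit G A ws Hws) as [Hexp Hfit].
  assert (E : word_equiv G a2 (concat ws)) by (eapply we_trans; eauto).
  destruct (close_words_heights a1 a2 0 Hl ltac:(lra)) as [HP HS].
  split.
  - rewrite <- (texp_equiv G _ _ E1), HS, (texp_equiv G _ _ E). exact Hexp.
  - apply (reduces_equiv G A HA _ _ (we_sym _ _ _ E1)).
    assert (R2 : reduces G A (heights G 0 a2) 0)
      by (apply (reduces_equiv G A HA _ _ E); now constructor).
    pose proof (reduces_perturb _ _ _ _ _ _ R2 (perturb_sym _ _ _ _ HP)) as R.
    eapply reduces_mono; [exact R|lra].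
Qed.

End GraevDistance.

Theorem mainTheorem11 (G : IMGroup) (A : carrier G -> Prop) :
  is_subgroup G A -> closed_in G A -> graev_closed G (in_GtAt G A).
Proof.
  intros HA HC w Hw.
  assert (Hnear : forall eps, 0 < eps ->
            texp G w = 0%Z /\ reduces G A (heights G 0 w) eps).
  { intros eps He.
    assert (He' : 0 < Rmin eps (1 / 2)) by (apply Rmin_glb_lt; lra).
    destruct (Hw _ He') as [h [Hh Hwh]].
    destruct (graev_near_reduces G A w h _ HA Hh Hwh (Rmin_r _ _)) as [Hexp HR].
    split; [exact Hexp|]. eapply reduces_mono; [exact HR|apply Rmin_l]. }
  destruct (Hnear 1 ltac:(lra)) as [Hexp _].
  assert (H0 : reduces G A (heights G 0 w) 0)
    by (apply reduces_closed; auto; intros eps He; apply Hnear, He).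
  destruct (reduces_zero_word G A _ _ H0 (Rle_refl 0)) as [L [HL HE]].
  destruct (allowed_generators G A HA L HL) as [Hgen HE'].
  exists (map (gen_of_entry G) L); split; [exact Hgen|].
  eapply we_trans; [apply word_of_heights_0, Hexp|].
  eapply we_trans; [exact HE|exact HE'].
Qed.
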